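(* Assume the standing hypotheses (S) with $\lambda\ge0$ hold for two time steps $\tau,\eta>0$ (with initial data $X_0^\tau,X_0^\eta\in\mathbb H$ and corresponding scheme iterates). Then for every $t\ge0$, \[d^2_{\tau,\eta}(t;t)\le\|X_0^\tau-X_0^\eta\|^2_{\mathbb H}+\frac74\Big(\tau^2\|\nabla\phi^{\#}_{\rho_0}(X_0^\tau)\|^2_{\mathbb H}+\eta^2\|\nabla\phi^{\#}_{\rho_0}(X_0^\eta)\|^2_{\mathbb H}\Big).\]
   Context: Interpolations: for a time step $\tau$ and $t\in[n\tau,(n+1)\tau)$ set $\ell_\tau(t):=(t-n\tau)/\tau$, $\underline X_t^\tau:=X_n^\tau$, $\overline X_t^\tau:=X_{n+1}^\tau$; for $\xi\in\mathbb H$, $d^2_\tau(t;\xi):=(1-\ell_\tau(t))\|\xi-\underline X_t^\tau\|^2_{\mathbb H}+\ell_\tau(t)\|\xi-\overline X_t^\tau\|^2_{\mathbb H}$; and $d^2_{\tau,\eta}(t;t):=(1-\ell_\eta(t))\,d^2_\tau(t;\underline X_t^\eta)+\ell_\eta(t)\,d^2_\tau(t;\overline X_t^\eta)$. Standing hypotheses (S): $\rho_0\in\mathcal P_2(\mathbb R^d)$; $\mathbb H=L^2(\mathbb R^d;\rho_0)$ is the Hilbert space of $\rho_0$-square-integrable maps $\mathbb R^d\to\mathbb R^d$ with $\langle\xi_1,\xi_2\rangle_{\mathbb H}=\int\langle\xi_1,\xi_2\rangle d\rho_0$; $\phi:\mathcal P_2(\mathbb R^d)\to\mathbb R$ has lift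 $\phi^{\#}_{\rho_0}(\xi):=\phi(\xi_{\#}\rho_0)$ which is Fréchet differentiable on $\mathbb H$ (gradient $\nabla\phi^{\#}_{\rho_0}$), $\lambda$-convex on $\mathbb H$ for some $\lambda\in\mathbb R$ (i.e. $\phi^{\#}_{\rho_0}((1-t)\xi_1+t\xi_2)\le(1-t)\phi^{\#}_{\rho_0}(\xi_1)+t\phi^{\#}_{\rho_0}(\xi_2)-\frac\lambda2t(1-t)\|\xi_1-\xi_2\|_{\mathbb H}^2$), and $\inf_{\mathbb H}\phi^{\#}_{\rho_0}>-\infty$; the time step $\tau>0$ satisfies $\lambda/2+1/\tau>0$; $X_0^\tau\in\mathbb H$. Lagrangian trapezoidal scheme: $X_{n+1}^\tau$ is the (unique) minimizer over $\xi\in\mathbb H$ of $\tfrac12\phi^{\#}_{\rho_0}(\xi)+\tfrac12\langle\nabla\phi^{\#}_{\rho_0}(X_n^\tau),\xi\rangle_{\mathbb H}+\tfrac1{2\tau}\|\xi-X_n^\tau\|^2_{\mathbb H}$; equivalently $X_{n+1}^\tau=X_n^\tau-\frac\tau2\big(\nabla\phi^{\#}_{\rho_0}(X_{n+1}^\tau)+\nabla\phi^{\#}_{\rho_0}(X_n^\tau)\big)$. *)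

From HB Require Import structures.
From mathcomp Require Import all_boot all_order all_algebra.
From mathcomp Require Import all_classical all_reals.
From mathcomp Require Import topology normedtype derive.
Set Implicit Arguments. Unset Strict Implicit. Unset Printing Implicit Defensive.
Import Order.TTheory GRing.Theory Num.Theory.
Import numFieldNormedType.Exports.
Local Open Scope ring_scope.

(* The Hilbert space H is modelled as a complete normed space over a realType R
   together with an inner product ip inducing its norm. *)
Definition is_inner_product (R : realType) (H : normedModType R)
    (ip : H -> H -> R) : Prop :=
  [/\ forall x y, ip x y = ip y x,
      forall a x y z, ip (a *: x + y) z = a * ip x z + ip y z
    & forall x, `|x| ^+ 2 = ip x x].

Definition has_gradient (R : realType) (H : normedModType R)
    (ip : H -> H -> R) (psi : H -> R) (g : H -> H) : Prop :=
  forall x, differentiable psi x /\ forall h, 'd psi x h = ip (g x) h.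

Definition lambda_convex (R : realType) (H : normedModType R)
    (lam : R) (psi : H -> R) : Prop :=
  forall x1 x2 (s : R), 0 <= s <= 1 ->
    psi ((1 - s) *: x1 + s *: x2)
      <= (1 - s) * psi x1 + s * psi x2 - lam / 2 * s * (1 - s) * `|x1 - x2| ^+ 2.

Definition trap_functional (R : realType) (H : normedModType R)
    (ip : H -> H -> R) (psi : H -> R) (g : H -> H) (tau : R) (Xn xi : H) : R :=
  psi xi / 2 + ip (g Xn) xi / 2 + `|xi - Xn| ^+ 2 / (2 * tau).

Definition trap_scheme (R : realType) (H : normedModType R)
    (ip : H -> H -> R) (psi : H -> R) (g : H -> H) (tau : R) (X0 : H)
    (X : nat -> H) : Prop :=
  X 0%N = X0 /\
  forall n, forall xi, trap_functional ip psi g tau (X n) (X n.+1)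
                      <= trap_functional ip psi g tau (X n) xi.

Definition idx (R : realType) (tau t : R) : nat := Num.truncn (t / tau).
Definition ell (R : realType) (tau t : R) : R := (t - (idx tau t)%:R * tau) / tau.
Definition lowX (R : realType) (H : Type) (X : nat -> H) (tau t : R) : H :=
  X (idx tau t).
Definition upX (R : realType) (H : Type) (X : nat -> H) (tau t : R) : H :=
  X (idx tau t).+1.

Definition d2 (R : realType) (H : normedModType R) (X : nat -> H) (tau t : R)
    (xi : H) : R :=
  (1 - ell tau t) * `|xi - lowX X tau t| ^+ 2 + ell tau t * `|xi - upX X tau t| ^+ 2.

Definition d2two (R : realType) (H : normedModType R) (X Y : nat -> H)
    (tau eta t : R) : R :=
  (1 - ell eta t) * d2 X tau t (lowX Y eta t) + ell eta t * d2 X tau t (upX Y eta t).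

From mathcomp Require Import all_boot all_order all_algebra.
From mathcomp Require Import all_classical all_reals.
From mathcomp Require Import topology normedtype derive.
From mathcomp Require Import ring lra.
Import Order.TTheory GRing.Theory Num.Theory.
Import numFieldNormedType.Exports.
Local Open Scope classical_set_scope.
Local Open Scope ring_scope.

(* The Euler-Lagrange equation of each step is the trapezoidal rule
   X_{n+1} - X_n = -tau/2 (grad phi(X_n) + grad phi(X_{n+1})).  Together with
   the gradient inequality of the convex functional it yields monotonicity of
   |grad phi(X_n)|, the decay phi(X_n) - phi(X_{n+1}) <= tau |grad phi(X_n)|^2,
   and a discrete evolution variational inequality (EVI) for every step.
   Along the common time axis of the two schemes, the bilinearly interpolated
   squared distance minus explicit energy corrections (of size at most
   tau^2/2 |grad phi(X_0)|^2 and eta^2/2 |grad phi(Y_0)|^2) is nonincreasing: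
   on each rectangle of the two time grids its decrease is a nonnegative
   combination of the four EVIs at the corners, and it is continuous across
   grid lines.  Hence it stays below its initial value |X_0 - Y_0|^2. *)

Lemma grid_descent {R : realFieldType} {tau eta : R} {Q : nat -> R -> nat -> R -> R} :
  0 < tau -> 0 < eta ->
  (forall n m l1 l2 k1 k2, 0 <= l1 <= l2 -> l2 <= 1 -> 0 <= k1 <= k2 -> k2 <= 1 ->
     (l2 - l1) * tau = (k2 - k1) * eta -> Q n l2 m k2 <= Q n l1 m k1) ->
  (forall n m k, Q n.+1 0 m k = Q n 1 m k) ->
  (forall n m l, Q n l m.+1 0 = Q n l m 1) ->
  forall n m l k, 0 <= l <= 1 -> 0 <= k <= 1 ->
    (n%:R + l) * tau = (m%:R + k) * eta -> Q n l m k <= Q 0 0 0 0.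
Proof.
move=> + + + + + n m; move: {2}(n + m)%N (leqnn (n + m)) => N.
elim: N tau eta Q n m => [|N IH] tau eta Q n m nm tau_gt0 eta_gt0 cell Xjoin Yjoin l k.
  move: nm; rewrite leqn0 addn_eq0 => /andP[/eqP-> /eqP->] /andP[l0 l1] /andP[k0 k1].
  by rewrite !add0r => lk; apply: cell; rewrite ?lexx ?l0 ?k0 ?subr0.
(* Walk back along the diagonal to the last grid line crossed; by symmetry it
   is a line of the tau-grid. *)
wlog order : tau eta Q n m l k nm tau_gt0 eta_gt0 cell Xjoin Yjoin / m%:R * eta <= n%:R * tau.
  move=> wlog_order; have [|] := lerP (m%:R * eta) (n%:R * tau); first exact: wlog_order.
  move=> /ltW order l01 k01 lk.
  apply: (wlog_order eta tau (fun m k n l => Q n l m k) m n k l) => //.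
  - by rewrite addnC.
  - by move=> ? ? ? ? ? ? ? ? ? ? /esym; exact: cell.
move=> /andP[l0 l1] /andP[k0 k1] lk.
set k' := (n%:R * tau - m%:R * eta) / eta.
have k'_eta : k' * eta = n%:R * tau - m%:R * eta by rewrite divfK ?gt_eqF.
have k'0 : 0 <= k' by rewrite divr_ge0 ?subr_ge0 // ltW.
have k'k : k' <= k by rewrite -(ler_pM2r eta_gt0) k'_eta; nra.
apply: le_trans (cell n m 0 l k' k _ _ _ _ _) _ => //; rewrite ?lexx ?k'0 //.
  by rewrite subr0 mulrBl k'_eta; lra.
clearbody k'; case: n nm order lk k'_eta => [|n] nm order lk k'_eta.
  have m0 : m = 0%N.
    apply/eqP; rewrite -(pnatr_eq0 R) eq_le ler0n andbT.
    by move: order; rewrite mul0r pmulr_lle0.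
  have : k' * eta = 0 by rewrite k'_eta m0 !mul0r subrr.
  by move/eqP; rewrite mulf_eq0 (gt_eqF eta_gt0) orbF m0 => /eqP->.
rewrite Xjoin; apply: (IH tau eta) => //; rewrite ?lexx ?ler01 ?k'0 //.
- exact: le_trans k'k k1.
- by move: k'_eta; rewrite -natr1; lra.
Qed.

Lemma idx_ell_decomp {R : realType} {tau t : R} : 0 < tau -> 0 <= t ->
  [/\ 0 <= ell tau t <= 1 & ((idx tau t)%:R + ell tau t) * tau = t].
Proof.
move=> tau_gt0 t_ge0; rewrite /ell /idx.
have /andP[] := truncn_itv (divr_ge0 t_ge0 (ltW tau_gt0)).
set n := Num.truncn (t / tau); rewrite ler_pdivlMr // ltr_pdivrMr // -natr1 => lo hi.
split; last by field; rewrite gt_eqF.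
by rewrite divr_ge0 ?subr_ge0 ?(ltW tau_gt0) //= ler_pdivrMr //; lra.
Qed.

Section InnerProduct.
Context {R : realType} {H : normedModType R} {ip : H -> H -> R}.
Hypothesis ip_inner : is_inner_product ip.

Lemma ipC x y : ip x y = ip y x. Proof. by case: ip_inner. Qed.

Lemma ip_sqr_norm x : `|x| ^+ 2 = ip x x. Proof. by case: ip_inner. Qed.

Lemma ip_ge0 x : 0 <= ip x x. Proof. by rewrite -ip_sqr_norm sqr_ge0. Qed.

Lemma ipDl x y z : ip (x + y) z = ip x z + ip y z.
Proof. by case: ip_inner => _ lin _; rewrite -[x]scale1r lin mul1r scale1r. Qed.

Lemma ip0l z : ip 0 z = 0.
Proof. by have := ipDl 0 0 z; rewrite addr0; lra. Qed.

Lemma ipZl a x z : ip (a *: x) z = a * ip x z.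
Proof. by case: ip_inner => _ lin _; rewrite -[a *: x]addr0 lin ip0l addr0. Qed.

Lemma ipNl x z : ip (- x) z = - ip x z.
Proof. by rewrite -scaleN1r ipZl mulN1r. Qed.

Lemma ipDr x y z : ip z (x + y) = ip z x + ip z y.
Proof. by rewrite ipC ipDl !(ipC z). Qed.

Lemma ipZr a x z : ip z (a *: x) = a * ip z x.
Proof. by rewrite ipC ipZl (ipC z). Qed.

Lemma ipNr x z : ip z (- x) = - ip z x.
Proof. by rewrite ipC ipNl (ipC z). Qed.

Lemma sqr_normD x y : `|x + y| ^+ 2 = `|x| ^+ 2 + 2 * ip x y + `|y| ^+ 2.
Proof. by rewrite !ip_sqr_norm ipDl !ipDr (ipC y x); ring. Qed.

Lemma ip_ge0_eq0 v : (forall h, 0 <= ip v h) -> v = 0.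
Proof.
move=> v_ge0; apply/normr0_eq0/eqP; rewrite -sqrf_eq0 ip_sqr_norm eq_le ip_ge0.
by rewrite -oppr_ge0 -ipNr v_ge0.
Qed.

End InnerProduct.

Section Gradient.
Context {R : realType} {H : normedModType R} {ip : H -> H -> R}.
Context {psi : H -> R} {g : H -> H}.
Hypotheses (ip_inner : is_inner_product ip) (psi_grad : has_gradient ip psi g).

Lemma grad_quotient_cvg x h :
  (fun s : R => s^-1 * (psi (s *: h + x) - psi x)) @ 0^'+ --> ip (g x) h.
Proof.
have [dx <-] := psi_grad x.
rewrite -deriveE //.
have right_to_punctured : (0 : R)^'+ `=>` 0^'.
  by move=> P [e e0 eP]; exists e => // y /= ye y0; apply: eP; rewrite ?gt_eqF.
set q := fun s : R => s^-1 *: ((psi \o shift x) (s *: h) - psi x).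
change (q @ 0^'+ --> 'D_h psi x).
exact: cvg_trans (cvg_app q right_to_punctured) (@diff_derivable _ _ _ psi x h dx).
Qed.

Lemma grad_ineq {lam} : lambda_convex lam psi -> 0 <= lam ->
  forall x y, psi x + ip (g x) (y - x) <= psi y.
Proof.
move=> psi_cvx lam_ge0 x y; rewrite -lerBrDl.
apply: (cvgr_to_le (grad_quotient_cvg x (y - x))); near=> s.
have s_gt0 : 0 < s by near: s; exact: nbhs_right_gt.
have s_lt1 : s < 1 by near: s; exact: nbhs_right_lt.
have -> : s *: (y - x) + x = (1 - s) *: x + s *: y.
  by rewrite scalerBr scalerBl scale1r addrC addrA [x + _]addrC -addrA addrC.
have := psi_cvx x y s; rewrite (ltW s_gt0) (ltW s_lt1) => /(_ isT) cvx_s.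
have curv_ge0 : 0 <= lam / 2 * s * (1 - s) * `|x - y| ^+ 2.
  by rewrite !mulr_ge0 ?sqr_ge0 ?invr_ge0 ?subr_ge0 ?(ltW s_gt0) ?(ltW s_lt1).
rewrite mulrC ler_pdivrMr //; nra.
Unshelve. all: by end_near.
Qed.

Section TrapMinimizer.
Variables (tau : R) (Xn Xm : H).
Hypotheses (tau_gt0 : 0 < tau)
  (Xm_min : forall xi, trap_functional ip psi g tau Xn Xm <= trap_functional ip psi g tau Xn xi).

Lemma trap_minimizer_dir_ge0 h :
  0 <= ip (g Xm) h + ip (g Xn) h + 2 / tau * ip (Xm - Xn) h.
Proof.
have lin : (fun s : R => s * (ip h h / tau)) @ 0^'+ --> 0.
  rewrite -[X in _ --> X](mul0r (ip h h / tau)); apply: cvgMr_tmp.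
  exact/cvg_at_right_filter/cvg_id.
have quot : (fun s : R => s^-1 * (psi (s *: h + Xm) - psi Xm) + s * (ip h h / tau))
    @ 0^'+ --> ip (g Xm) h.
  by rewrite -[ip (g Xm) h]addr0; apply: cvgD => //; exact: grad_quotient_cvg.
suff : - (ip (g Xn) h + 2 / tau * ip (Xm - Xn) h) <= ip (g Xm) h by lra.
apply: (cvgr_to_ge quot); near=> s.
have s_gt0 : 0 < s by near: s; exact: nbhs_right_gt.
have := Xm_min (s *: h + Xm); rewrite /trap_functional -(addrA (s *: h)).
rewrite (sqr_normD ip_inner (s *: h)) (ip_sqr_norm ip_inner (s *: h)).
rewrite (ipDr ip_inner) !(ipZl ip_inner, ipZr ip_inner).
set A := psi (s *: h + Xm); set B := psi Xm => min_s.
rewrite -subr_ge0 in min_s; rewrite (ipC ip_inner (Xm - Xn)) -subr_ge0 opprK.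
suff -> : s^-1 * (A - B) + s * (ip h h / tau) + (ip (g Xn) h + 2 / tau * ip h (Xm - Xn))
    = 2 / s * (A / 2 + (s * ip (g Xn) h + ip (g Xn) Xm) / 2
       + (s * (s * ip h h) + 2 * (s * ip h (Xm - Xn)) + `|Xm - Xn| ^+ 2) / (2 * tau)
       - (B / 2 + ip (g Xn) Xm / 2 + `|Xm - Xn| ^+ 2 / (2 * tau))).
  by rewrite mulr_ge0 // divr_ge0 // ltW.
by field; rewrite !gt_eqF.
Unshelve. all: by end_near.
Qed.

Lemma trap_minimizer_step : Xm - Xn = - (tau / 2) *: (g Xn + g Xm).
Proof.
have : g Xm + g Xn + (2 / tau) *: (Xm - Xn) = 0.
  apply: (ip_ge0_eq0 ip_inner) => h.
  by rewrite !(ipDl ip_inner) (ipZl ip_inner); exact: trap_minimizer_dir_ge0.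
move/eqP; rewrite addrC addr_eq0 => /eqP step.
have -> : Xm - Xn = (tau / 2) *: ((2 / tau) *: (Xm - Xn)).
  by rewrite scalerA (_ : tau / 2 * (2 / tau) = 1) ?scale1r //; field; rewrite gt_eqF.
by rewrite step scalerN scaleNr addrC.
Qed.

End TrapMinimizer.

Definition energy_corr (Z : nat -> H) (h : R) (n : nat) (l : R) : R :=
  h ^+ 2 / 4 * (`|g (Z 0%N)| ^+ 2 - `|g (Z n)| ^+ 2)
  + l * (h ^+ 2 / 4 * (`|g (Z n)| ^+ 2 - `|g (Z n.+1)| ^+ 2))
  + h * (l * (1 - l)) * (psi (Z n) - psi (Z n.+1)).

Section Scheme.
Context {lam tau : R} {X0 : H} {X : nat -> H}.
Hypotheses (psi_cvx : lambda_convex lam psi) (lam_ge0 : 0 <= lam) (tau_gt0 : 0 < tau).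
Hypothesis X_scheme : trap_scheme ip psi g tau X0 X.

Let grad_ineqX := grad_ineq psi_cvx lam_ge0.

Lemma scheme_step k : X k.+1 - X k = - (tau / 2) *: (g (X k) + g (X k.+1)).
Proof. by case: X_scheme => _ X_min; exact: trap_minimizer_step. Qed.

Lemma grad_norm_scheme_le k : `|g (X k.+1)| ^+ 2 <= `|g (X k)| ^+ 2.
Proof.
have fwd := grad_ineqX (X k) (X k.+1); have bwd := grad_ineqX (X k.+1) (X k).
move: fwd bwd; rewrite -(opprB (X k.+1)) scheme_step !(ip_sqr_norm ip_inner).
rewrite !(ipNr ip_inner, ipZr ip_inner, ipDr ip_inner) (ipC ip_inner (g (X k.+1))).
set u := g (X k); set w := g (X k.+1) => fwd bwd.
have : tau * (ip w w - ip u u) <= 0 by lra.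
by rewrite pmulr_rle0 // subr_le0.
Qed.

Lemma grad_norm_scheme_le0 k : `|g (X k)| ^+ 2 <= `|g (X 0)| ^+ 2.
Proof. by elim: k => // k; exact: le_trans (grad_norm_scheme_le k). Qed.

Lemma energy_scheme_decr k : psi (X k) - psi (X k.+1) <= tau * `|g (X k)| ^+ 2.
Proof.
have fwd := grad_ineqX (X k) (X k.+1); have mono := grad_norm_scheme_le k.
have cross := ip_ge0 ip_inner (g (X k) - g (X k.+1)).
move: fwd mono cross; rewrite scheme_step !(ip_sqr_norm ip_inner).
rewrite !(ipDl ip_inner, ipDr ip_inner, ipZr ip_inner, ipNl ip_inner, ipNr ip_inner).
rewrite (ipC ip_inner (g (X k.+1))).
set u := g (X k); set w := g (X k.+1) => fwd mono cross.
have : tau * ip u w <= tau * ip u u by rewrite ler_pM2l //; lra.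
lra.
Qed.

Lemma scheme_evi k xi :
  `|xi - X k.+1| ^+ 2 - `|xi - X k| ^+ 2 <=
  2 * tau * (psi xi - (psi (X k) + psi (X k.+1)) / 2)
  + tau ^+ 2 / 4 * (`|g (X k)| ^+ 2 - `|g (X k.+1)| ^+ 2).
Proof.
have fwd := grad_ineqX (X k.+1) xi; have bwd := grad_ineqX (X k) xi.
have split : xi - X k.+1 = (xi - X k) - (X k.+1 - X k) by rewrite opprB addrA subrK.
move: fwd bwd; rewrite !(ip_sqr_norm ip_inner) split scheme_step.
move: (xi - X k) => b; set u := g (X k); set w := g (X k.+1).
rewrite !(ipDl ip_inner, ipDr ip_inner, ipZl ip_inner, ipZr ip_inner, ipNl ip_inner, ipNr ip_inner).
rewrite (ipC ip_inner w u) (ipC ip_inner u b) (ipC ip_inner w b) => fwd bwd.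
have := ler_wpM2l (ltW tau_gt0) fwd; have := ler_wpM2l (ltW tau_gt0) bwd.
rewrite !mulrDr => ? ?; lra.
Qed.

Lemma energy_corr_le n l : 0 <= l <= 1 ->
  energy_corr X tau n l <= tau ^+ 2 / 2 * `|g (X 0%N)| ^+ 2.
Proof.
move=> /andP[l0 l1]; rewrite /energy_corr.
have := grad_norm_scheme_le0 n; have := grad_norm_scheme_le n.
have := energy_scheme_decr n; have := sqr_ge0 `|g (X n.+1)|.
set G0 := `|g (X 0%N)| ^+ 2; set Gn := `|g (X n)| ^+ 2; set Gn1 := `|g (X n.+1)| ^+ 2.
set c := psi (X n) - psi (X n.+1) => Gn1_ge0 c_le Gn1_le Gn_le.
have w0 : 0 <= l * (1 - l) by rewrite mulr_ge0 // subr_ge0.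
have w1 : l * (1 - l) <= 1 / 4 by have := sqr_ge0 (l - 1 / 2); rewrite expr2; lra.
have tau_ge0 := ltW tau_gt0; have tau2 : 0 <= tau ^+ 2 by exact: sqr_ge0.
have Gn_ge0 : 0 <= Gn by exact: sqr_ge0.
have : 0 <= tau * (l * (1 - l)) * (tau * Gn - c).
  by rewrite mulr_ge0 ?mulr_ge0 ?subr_ge0.
have : 0 <= tau ^+ 2 * Gn * (1 / 4 - l * (1 - l)).
  by apply: mulr_ge0; [exact: mulr_ge0 | lra].
have : 0 <= tau ^+ 2 * (l * Gn1) by rewrite mulr_ge0 ?mulr_ge0.
have : 0 <= tau ^+ 2 * ((1 - l) * Gn) by rewrite mulr_ge0 ?mulr_ge0 ?subr_ge0.
have : 0 <= tau ^+ 2 * (G0 - Gn) by rewrite mulr_ge0 ?subr_ge0.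
lra.
Qed.

End Scheme.

Section TwoSchemes.
Context {lam tau eta : R} {X0 Y0 : H} {X Y : nat -> H}.
Hypotheses (psi_cvx : lambda_convex lam psi) (lam_ge0 : 0 <= lam).
Hypotheses (tau_gt0 : 0 < tau) (eta_gt0 : 0 < eta).
Hypothesis X_scheme : trap_scheme ip psi g tau X0 X.
Hypothesis Y_scheme : trap_scheme ip psi g eta Y0 Y.

Definition interp_dist (n : nat) (l : R) (m : nat) (k : R) : R :=
  (1 - k) * ((1 - l) * `|Y m - X n| ^+ 2 + l * `|Y m - X n.+1| ^+ 2)
  + k * ((1 - l) * `|Y m.+1 - X n| ^+ 2 + l * `|Y m.+1 - X n.+1| ^+ 2).

Definition lyap (n : nat) (l : R) (m : nat) (k : R) : R :=
  interp_dist n l m k - energy_corr X tau n l - energy_corr Y eta m k.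

Lemma d2two_interp t :
  d2two X Y tau eta t = interp_dist (idx tau t) (ell tau t) (idx eta t) (ell eta t).
Proof. by []. Qed.

Lemma lyap_cell_nonincr n m l1 l2 k1 k2 :
  0 <= l1 <= l2 -> l2 <= 1 -> 0 <= k1 <= k2 -> k2 <= 1 ->
  (l2 - l1) * tau = (k2 - k1) * eta -> lyap n l2 m k2 <= lyap n l1 m k1.
Proof.
move=> /andP[l1_ge0 l12] l2_le1 /andP[k1_ge0 k12] k2_le1 diag.
have evi1 := scheme_evi psi_cvx lam_ge0 tau_gt0 X_scheme n (Y m).
have evi2 := scheme_evi psi_cvx lam_ge0 tau_gt0 X_scheme n (Y m.+1).
have evi3 := scheme_evi psi_cvx lam_ge0 eta_gt0 Y_scheme m (X n).
have evi4 := scheme_evi psi_cvx lam_ge0 eta_gt0 Y_scheme m (X n.+1).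
rewrite !(distrC (X _)) in evi3 evi4.
set a := l2 - l1; set b := k2 - k1.
set lm := (l1 + l2) / 2; set km := (k1 + k2) / 2.
have a_ge0 : 0 <= a by rewrite subr_ge0.
have b_ge0 : 0 <= b by rewrite subr_ge0.
have w1 : 0 <= a * (1 - km) by rewrite mulr_ge0 // /km; lra.
have w2 : 0 <= a * km by rewrite mulr_ge0 // /km; lra.
have w3 : 0 <= b * (1 - lm) by rewrite mulr_ge0 // /lm; lra.
have w4 : 0 <= b * lm by rewrite mulr_ge0 // /lm; lra.
have := ler_wpM2l w1 evi1; have := ler_wpM2l w2 evi2.
have := ler_wpM2l w3 evi3; have := ler_wpM2l w4 evi4.
(* Weighting the four EVIs by the two velocities times the midpoint weights
   gives the decrease exactly, up to the term below, which vanishes since the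
   cell is crossed along its diagonal. *)
set U := 2 * ((1 - km) * psi (Y m) + km * psi (Y m.+1) - (psi (X n) + psi (X n.+1)) / 2)
  - (1 - 2 * lm) * (psi (X n) - psi (X n.+1)).
have : (a * tau - b * eta) * U = 0 by rewrite diag subrr mul0r.
rewrite /lyap /interp_dist /energy_corr /U /a /b /lm /km => ? ? ? ? ?; lra.
Qed.

Lemma lyap_le n l m k : 0 <= l <= 1 -> 0 <= k <= 1 ->
  (n%:R + l) * tau = (m%:R + k) * eta -> lyap n l m k <= `|X0 - Y0| ^+ 2.
Proof.
have -> : `|X0 - Y0| ^+ 2 = lyap 0 0 0 0.
  rewrite /lyap /interp_dist /energy_corr.
  by case: X_scheme => -> _; case: Y_scheme => -> _; rewrite distrC; ring.
move=> l01 k01 diag.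
apply: (grid_descent tau_gt0 eta_gt0 lyap_cell_nonincr _ _ n m l k l01 k01 diag) => *;
  by rewrite /lyap /interp_dist /energy_corr; ring.
Qed.

Lemma d2two_le t : 0 <= t -> d2two X Y tau eta t
  <= `|X0 - Y0| ^+ 2 + tau ^+ 2 / 2 * `|g X0| ^+ 2 + eta ^+ 2 / 2 * `|g Y0| ^+ 2.
Proof.
move=> t_ge0.
have [l01 tE] := idx_ell_decomp tau_gt0 t_ge0.
have [k01 tE'] := idx_ell_decomp eta_gt0 t_ge0.
have := lyap_le (idx tau t) (ell tau t) (idx eta t) (ell eta t) l01 k01 (etrans tE (esym tE')).
have := energy_corr_le psi_cvx lam_ge0 tau_gt0 X_scheme (idx tau t) (ell tau t) l01.
have := energy_corr_le psi_cvx lam_ge0 eta_gt0 Y_scheme (idx eta t) (ell eta t) k01.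
case: X_scheme => -> _; case: Y_scheme => -> _.
rewrite d2two_interp /lyap; lra.
Qed.

End TwoSchemes.
End Gradient.

Theorem mainTheorem12 (R : realType) (H : completeNormedModType R)
    (ip : H -> H -> R) (psi : H -> R) (g : H -> H) (lam tau eta : R)
    (X0tau X0eta : H) (X Y : nat -> H) :
  is_inner_product ip ->
  has_gradient ip psi g ->
  lambda_convex lam psi ->
  (exists m : R, forall xi, m <= psi xi) ->
  0 <= lam ->
  0 < tau -> 0 < eta ->
  0 < lam / 2 + 1 / tau -> 0 < lam / 2 + 1 / eta ->
  trap_scheme ip psi g tau X0tau X ->
  trap_scheme ip psi g eta X0eta Y ->
  forall t : R, 0 <= t ->
    d2two X Y tau eta t
      <= `|X0tau - X0eta| ^+ 2
         + 7 / 4 * (tau ^+ 2 * `|g X0tau| ^+ 2 + eta ^+ 2 * `|g X0eta| ^+ 2).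
Proof.
(* The lower bound and the step-size condition only serve to produce the
   minimizers, whose existence is part of [trap_scheme]. *)
move=> ip_inner psi_grad psi_cvx _ lam_ge0 tau_gt0 eta_gt0 _ _ X_scheme Y_scheme t t_ge0.
have := d2two_le ip_inner psi_grad psi_cvx lam_ge0 tau_gt0 eta_gt0 X_scheme Y_scheme t t_ge0.
have := mulr_ge0 (sqr_ge0 tau) (sqr_ge0 `|g X0tau|).
have := mulr_ge0 (sqr_ge0 eta) (sqr_ge0 `|g X0eta|).
lra.
Qed.
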